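(* Let $V:\Omega\to[1,\infty)$ be measurable, $\varphi$ an admissible rate function, and $S$ a stochastic operator on $\mathcal M_V$. Assume: (1) $S$ satisfies the weak Lyapunov condition for $V,\varphi$: there exist $K>0$ and $0<\varsigma<1$ with $$\|S\mu\|_V+\varsigma\|\mu\|_{\varphi(V)}\le\|\mu\|_V+K\|\mu\|\qquad\text{for all }\mu\in\mathcal M_V;$$ (2) for some integer $N\ge1$, $S^N$ satisfies the local coupling condition for the weight $\varphi(V)$: there exist $0<\gamma_H<1$ and $A>K/\varsigma$ such that for every $\nu\in\mathcal N_{\varphi(V)}$ with $\|\nu\|_{\varphi(V)}\le A\|\nu\|$ one has $\|S^N\nu\|\le\gamma_H\|\nu\|$. Set $\beta:=(1-\gamma_H)/(KN)$, $\alpha:=\beta(\varsigma-K/A)>0$ and $|||\mu|||_V:=\|\mu\|+\beta\|\mu\|_V$ for $\mu\in\mathcal M_V$. Then for every $\nu\in\mathcal N_V$ there exists an integer $n$ with $N\le n\le 2N-1$ such that $$|||S^n\nu|||_V+\alpha\sum_{k=0}^{n-1}\|S^k\nu\|_{\varphi(V)}\le|||\nu|||_V .$$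
   Context: Let $(\Omega,\mathcal E)$ be a measurable space. $\mathcal M$ denotes the space of finite signed measures on $\Omega$, $\mathcal P\subset\mathcal M$ the set of probability measures, and $\mathcal N=\{\nu\in\mathcal M:\nu(\Omega)=0\}$. For $\mu\in\mathcal M$ with Hahn–Jordan decomposition $\mu=\mu_+-\mu_-$, $|\mu|=\mu_++\mu_-$ and $\|\mu\|=\int_\Omega d|\mu|$ is the total variation norm. For a measurable $W:\Omega\to[1,\infty)$, $\|\mu\|_W=\int_\Omega W\,d|\mu|$, $\mathcal M_W=\{\mu\in\mathcal M:\|\mu\|_W<\infty\}$, $\mathcal P_W=\mathcal P\cap\mathcal M_W$, $\mathcal N_W=\mathcal N\cap\mathcal M_W$. A stochastic operator is a linear map $S:\mathcal M\to\mathcal M$ with $S(\mathcal P)\subseteq\mathcal P$; it is a stochastic operator on $\mathcal M_W$ if moreover $S(\mathcal M_W)\subseteq\mathcal M_W$ and the restriction is bounded for $\|\cdot\|_W$. An admissible rate function is a concave function $\varphi:[1,\infty)\to[1,\infty)$ with $\varphi(1)=1$ and $\varphi(v)/v\to0$ as $v\to\infty$; $\varphi(V)$ denotes the composition $\varphi\circ V$. *)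

From HB Require Import structures.
From mathcomp Require Import all_boot all_order all_algebra.
From mathcomp Require Import all_classical all_reals all_analysis.
Set Implicit Arguments. Unset Strict Implicit. Unset Printing Implicit Defensive.
Import Order.TTheory GRing.Theory Num.Theory.
Import numFieldNormedType.Exports.
Local Open Scope classical_set_scope.
Local Open Scope ring_scope.

(* Finite signed measures on (T, measurable) are the charges of
   MathComp-Analysis: {charge set T -> \bar R}. *)

Section SignedMeasures.
Context {R : realType} (d : measure_display) (T : measurableType d).

Definition hahn_sets (mu : {charge set T -> \bar R}) : set T * set T :=
  let P := sval (cid (Hahn_decomposition mu)) in
  let N := sval (cid (svalP (cid (Hahn_decomposition mu)))) in (P, N).

Lemma hahn_setsP (mu : {charge set T -> \bar R}) :
  hahn_decomposition mu (hahn_sets mu).1 (hahn_sets mu).2.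
Proof. exact: (svalP (cid (svalP (cid (Hahn_decomposition mu))))). Qed.

Definition tv (mu : {charge set T -> \bar R}) : {measure set T -> \bar R} :=
  charge_variation (hahn_setsP mu).

Definition tvnorm (mu : {charge set T -> \bar R}) : R := fine (tv mu setT).

Definition wnorm (W : T -> R) (mu : {charge set T -> \bar R}) : \bar R :=
  (\int[tv mu]_x (W x)%:E)%E.

Definition in_MW (W : T -> R) (mu : {charge set T -> \bar R}) : Prop :=
  (wnorm W mu < +oo)%E.

Definition is_prob (mu : {charge set T -> \bar R}) : Prop :=
  (forall A, measurable A -> (0 <= mu A)%E) /\ mu setT = 1%E.

Definition is_null_mass (mu : {charge set T -> \bar R}) : Prop :=
  mu setT = 0%E.

(* linear map M -> M (equality of charges as set functions on measurable sets) *)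
Definition is_linear_op (S : {charge set T -> \bar R} -> {charge set T -> \bar R}) :=
  forall (a : R) (mu nu : {charge set T -> \bar R}) (A : set T), measurable A ->
    S (cadd (cscale a mu) nu) A = (a%:E * S mu A + S nu A)%E.

Definition stochastic_op S := is_linear_op S /\ forall mu, is_prob mu -> is_prob (S mu).

Definition stochastic_op_on (W : T -> R) S :=
  stochastic_op S /\ (forall mu, in_MW W mu -> in_MW W (S mu)) /\
  exists C : R, forall mu, in_MW W mu -> (wnorm W (S mu) <= C%:E * wnorm W mu)%E.

End SignedMeasures.

Definition admissible_rate {R : realType} (phi : R -> R) : Prop :=
  [/\ (forall x y t, 1 <= x -> 1 <= y -> 0 <= t <= 1 ->
         t * phi x + (1 - t) * phi y <= phi (t * x + (1 - t) * y)),
      (forall v, 1 <= v -> 1 <= phi v),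
      phi 1 = 1 &
      (phi v / v) @[v --> +oo] --> 0].

From HB Require Import structures.
From mathcomp Require Import all_boot all_order all_algebra.
From mathcomp Require Import all_classical all_reals all_analysis.
From mathcomp Require Import ring lra zify.
From Stdlib Require Import ProofIrrelevance.
Set Implicit Arguments. Unset Strict Implicit. Unset Printing Implicit Defensive.
Import Order.TTheory GRing.Theory Num.Theory.
Import numFieldNormedType.Exports.
Local Open Scope classical_set_scope.
Local Open Scope ring_scope.

(* Write t_k, v_k, f_k for the total variation, V- and phi(V)-norms of S^k nu.
   The Lyapunov condition telescopes to
     v_n + varsigma sum_{k<n} f_k <= v_0 + K sum_{k<n} t_k.
   Writing mu = a p - b q with p, q probabilities (normalised Jordan parts),
   S mu = a S p - b S q has total variation at most a + b = ||mu|| and the same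
   mass as mu; so t_k <= t_0 and every S^k nu stays in N.  Let k0 < N be the
   first index with f_k0 <= A t_k0.  Before k0 the cost K t_k is below
   (K/A) f_k, so varsigma f_k pays for it and leaves alpha/beta f_k; at k0 the
   coupling gives t_{k0+N} <= gamma_H t_0, and the gain (1 - gamma_H) t_0 =
   beta K N t_0 pays for the remaining N steps.  If there is no such k0, n = N
   works and no gain is needed. *)

Section lyapunov_sequences.
Variables (R : realFieldType) (t v f : nat -> R) (K varsigma : R).
Hypothesis lyapunov : forall k, v k.+1 + varsigma * f k <= v k + K * t k.

Lemma lyapunov_telescope n :
  v n + varsigma * \sum_(0 <= k < n) f k <= v 0 + K * \sum_(0 <= k < n) t k.
Proof.
elim: n => [|n IHn]; first by rewrite !big_geq // !mulr0 !addr0.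
by rewrite !big_nat_recr //= !mulrDr; have := lyapunov n; lra.
Qed.

Hypotheses (K_gt0 : 0 < K) (f_ge0 : forall k, 0 <= f k).
Hypotheses (t_ge0 : forall k, 0 <= t k) (t_le0 : forall k, t k <= t 0).

Lemma lyapunov_descent (c beta : R) (k0 n : nat) :
  0 <= c -> 0 <= beta -> (forall k, (k < k0)%N -> K * t k < c * f k) ->
  (k0 <= n)%N -> t n + beta * ((n - k0)%:R * (K * t 0)) <= t 0 ->
  t n + beta * v n + beta * (varsigma - c) * \sum_(0 <= k < n) f k
    <= t 0 + beta * v 0.
Proof.
move=> c_ge0 beta_ge0 lt_k0 le_k0n gain.
have cost : \sum_(0 <= k < n) (K * t k - c * f k) <= (n - k0)%:R * (K * t 0).
  rewrite (@big_cat_nat _ _ _ k0) //= -[X in _ <= X]add0r.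
  apply: lerD.
    apply: le_trans (ler_sum_nat (G := fun=> 0) _) _; last by rewrite sumr_const_nat mul0rn.
    by move=> k /andP[_ /lt_k0]; lra.
  rewrite mulr_natl -sumr_const_nat; apply: ler_sum_nat => k _.
  have := ler_wpM2l (ltW K_gt0) (t_le0 k); have := mulr_ge0 c_ge0 (f_ge0 k); lra.
move: cost; rewrite sumrB -!mulr_sumr => cost.
have := ler_wpM2l beta_ge0 (lyapunov_telescope n).
have := ler_wpM2l beta_ge0 cost.
set Sf := \sum_(0 <= k < n) f k; set St := \sum_(0 <= k < n) t k.
rewrite !mulrDr ?mulrBr ?mulrBl !mulrA; lra.
Qed.

Lemma lyapunov_coupling_descent (A gamma : R) (N : nat) :
  0 < A -> 0 <= gamma <= 1 -> (0 < N)%N ->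
  (forall k, (k < N)%N -> f k <= A * t k -> t (k + N)%N <= gamma * t k) ->
  let beta := (1 - gamma) / (K * N%:R) in
  exists n, (N <= n <= 2 * N - 1)%N /\
    t n + beta * v n + beta * (varsigma - K / A) * \sum_(0 <= k < n) f k
      <= t 0 + beta * v 0.
Proof.
move=> A_gt0 /andP[gamma_ge0 gamma_le1] N_gt0 coupling beta.
have beta_ge0 : 0 <= beta.
  by apply: divr_ge0; [lra | apply: mulr_ge0; [exact: ltW | exact: ler0n]].
have KA_ge0 : 0 <= K / A by apply: divr_ge0; exact: ltW.
have KA_lt k : A * t k < f k -> K * t k < K / A * f k.
  move=> lt_tf; rewrite -mulrA ltr_pM2l //.
  by rewrite mulrC ltr_pdivlMr // mulrC.
have [ex_k|no_k] := pselect (exists k, (k < N)%N && (f k <= A * t k)).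
- case: (ex_minnP ex_k) => k /andP[lt_kN le_fk] min_k.
  exists (k + N)%N; split; first lia.
  apply: (lyapunov_descent KA_ge0 beta_ge0 _ (leq_addr _ _)).
    move=> j lt_jk; apply: KA_lt; rewrite ltNge; apply/negP => le_fj.
    by have := min_k j; rewrite le_fj andbT; lia.
  have -> : beta * ((k + N - k)%:R * (K * t 0)) = (1 - gamma) * t 0.
    rewrite addKn /beta; field; rewrite pnatr_eq0 -lt0n N_gt0 gt_eqF //=.
  have := coupling k lt_kN le_fk; have := t_le0 k; have := t_ge0 k.
  have := ler_wpM2l gamma_ge0 (t_le0 k); lra.
- exists N; split; first lia.
  apply: (lyapunov_descent KA_ge0 beta_ge0 _ (leqnn N)).
    move=> k lt_kN; apply: KA_lt; rewrite ltNge; apply/negP => le_fk.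
    by apply: no_k; exists k; rewrite lt_kN le_fk.
  by rewrite subnn mul0r mulr0 addr0.
Qed.

End lyapunov_sequences.

Section charges.
Context {R : realType} (d : measure_display) (T : measurableType d).

Implicit Types (mu nu p q : {charge set T -> \bar R}) (A : set T).

Lemma charge_ext mu nu : mu =1 nu -> mu = nu.
Proof.
case: mu nu => [f [[f0] [ffin] [fadd]]] [g [[g0] [gfin] [gadd]]] /= /funext fg.
subst g; congr Charge.Pack; f_equal; f_equal; exact: proof_irrelevance.
Qed.

Lemma cscaleE (a : R) mu A :
  (cscale a mu : {charge set T -> \bar R}) A = (a%:E * mu A)%E.
Proof. by []. Qed.

Lemma caddE mu nu A : (cadd mu nu : {charge set T -> \bar R}) A = (mu A + nu A)%E.
Proof. by []. Qed.

Lemma charge_fineE mu A : measurable A -> mu A = (fine (mu A))%:E.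
Proof. by move=> mA; rewrite fineK // fin_num_measure. Qed.

Lemma charge_eq_fine mu nu A : measurable A -> fine (mu A) = fine (nu A) -> mu A = nu A.
Proof. by move=> mA muA; rewrite (charge_fineE mu mA) (charge_fineE nu mA) muA. Qed.

Lemma charge_fine_comb mu (a b : R) p q A :
  measurable A -> mu A = (a%:E * p A + b%:E * q A)%E ->
  fine (mu A) = a * fine (p A) + b * fine (q A).
Proof. by move=> mA ->; rewrite (charge_fineE p mA) (charge_fineE q mA). Qed.

Lemma tvnormE mu : tvnorm mu =
  fine (jordan_pos (hahn_setsP mu) setT) + fine (jordan_neg (hahn_setsP mu) setT).
Proof. by rewrite /tvnorm /tv /charge_variation /= fineD ?fin_num_measure. Qed.

Lemma tvnorm_hahnE mu :
  tvnorm mu = fine (mu (hahn_sets mu).1) - fine (mu (hahn_sets mu).2).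
Proof.
rewrite tvnormE jordan_posE jordan_negE cjordan_posE cjordan_negE.
by rewrite /crestr0 mem_set //= /crestr !setTI fineN.
Qed.

Lemma tvnorm_ge0 mu : 0 <= tvnorm mu.
Proof. by rewrite tvnormE addr_ge0 // fine_ge0. Qed.

Lemma wnorm_ge0 W mu : (forall x, 0 <= W x) -> (0 <= wnorm W mu)%E.
Proof. by move=> W_ge0; apply: integral_ge0 => x _; rewrite lee_fin. Qed.

Lemma wnorm_fineE W mu : (forall x, 0 <= W x) -> in_MW W mu ->
  wnorm W mu = (fine (wnorm W mu))%:E.
Proof. by move=> W_ge0 muW; rewrite fineK // ge0_fin_numE // wnorm_ge0. Qed.

Lemma is_prob_eq mu nu : (forall A, measurable A -> mu A = nu A) ->
  is_prob nu -> is_prob mu.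
Proof. by move=> munu [nu_ge0 nu1]; split=> [A mA|]; rewrite munu // nu_ge0. Qed.

Definition dirac_charge (x : T) : {charge set T -> \bar R} := charge_of_finite_measure \d_x.

Lemma is_prob_dirac_charge x : is_prob (dirac_charge x).
Proof. by split=> [A mA|]; rewrite /= diracE ?lee_fin // mem_set. Qed.

Lemma finite_measure_normalize (m : {finite_measure set T -> \bar R}) :
  exists p : {charge set T -> \bar R}, (fine (m setT) != 0 -> is_prob p) /\
    forall A, measurable A -> m A = ((fine (m setT))%:E * p A)%E.
Proof.
set c := fine (m setT); have mT : m setT = c%:E by rewrite fineK ?fin_num_measure.
exists (cscale c^-1 (charge_of_finite_measure m)); split.
  move=> c_neq0; split=> [A mA|] /=; rewrite cscaleE.
    by rewrite mule_ge0 // lee_fin invr_ge0 fine_ge0.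
  by change (c^-1%:E * m setT = 1)%E; rewrite mT -EFinM mulVf.
move=> A mA; have [c0|c_neq0] := eqVneq c 0; last first.
  by rewrite /= cscaleE muleA -EFinM mulfV // mul1e.
have : (m A <= m setT)%E by rewrite le_measure // inE.
by rewrite mT c0 /= mul0e => mA_le0; apply/eqP; rewrite eq_le mA_le0 measure_ge0.
Qed.

Lemma jordan_prob_decomposition mu :
  exists (p q : {charge set T -> \bar R}) (a b : R),
  [/\ tvnorm mu = a + b, 0 <= a /\ 0 <= b, (a != 0 -> is_prob p), (b != 0 -> is_prob q) &
    forall A, measurable A -> mu A = (a%:E * p A + (- b)%:E * q A)%E].
Proof.
have [p [p1 pE]] := finite_measure_normalize (jordan_pos (hahn_setsP mu)).
have [q [q1 qE]] := finite_measure_normalize (jordan_neg (hahn_setsP mu)).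
exists p, q, (fine (jordan_pos (hahn_setsP mu) setT)),
  (fine (jordan_neg (hahn_setsP mu) setT)).
split; [exact: tvnormE | split; exact: fine_ge0 | by [] | by [] |].
move=> A mA; rewrite EFinN mulNe -(pE A mA) -(qE A mA).
by rewrite (jordan_decomp (hahn_setsP mu) mA) -mulN1e.
Qed.

Lemma is_prob_partition_le1 (r : {charge set T -> \bar R}) X Y :
  is_prob r -> measurable X -> measurable Y -> X `|` Y = setT -> X `&` Y = set0 ->
  `|fine (r X) - fine (r Y)| <= 1.
Proof.
move=> [r_ge0 r1] mX mY XY XY0.
have := charge_partition r measurableT mX mY XY XY0.
rewrite r1 !setTI (charge_fineE _ mX) (charge_fineE _ mY) -EFinD => -[rXY].
have := fine_ge0 (r_ge0 _ mX); have := fine_ge0 (r_ge0 _ mY).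
by rewrite ler_norml; lra.
Qed.

End charges.

Section stochastic_operator.
Context {R : realType} (d : measure_display) (T : measurableType d).
Variable S : {charge set T -> \bar R} -> {charge set T -> \bar R}.
Hypothesis S_stoch : stochastic_op S.
Implicit Types (mu nu z p q : {charge set T -> \bar R}) (A : set T).

Lemma stoch_fine_linear (a : R) mu nu A : measurable A ->
  fine (S (cadd (cscale a mu) nu) A) = a * fine (S mu A) + fine (S nu A).
Proof.
by move=> mA; rewrite S_stoch.1 // (charge_fineE (S mu) mA) (charge_fineE (S nu) mA).
Qed.

Lemma stoch_fine0 A : measurable A -> fine (S czero A) = 0.
Proof.
move=> mA; have czeroE : czero = cadd (cscale 1 czero) czero :> {charge set T -> \bar R}.
  by apply: charge_ext => B; rewrite caddE cscaleE mul1e adde0.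
by have := stoch_fine_linear 1 czero czero mA; rewrite -czeroE => {czeroE}; lra.
Qed.

Lemma stoch_fineZ (a : R) mu A : measurable A -> fine (S (cscale a mu) A) = a * fine (S mu A).
Proof.
move=> mA; have -> : cscale a mu = cadd (cscale a mu) czero :> {charge set T -> \bar R}.
  by apply: charge_ext => B; rewrite caddE adde0.
by rewrite stoch_fine_linear // stoch_fine0 // addr0.
Qed.

(* Linearity only speaks about measurable sets, so it must be shown that S
   does not see the values of its argument elsewhere.  If S z had nonzero
   mass y on A, then t z + \d_x, a probability for every real t, would be
   sent to t y + (S \d_x)(A), which is negative for a suitable t. *)
Lemma stoch_null z : (forall B, measurable B -> z B = 0%E) ->
  forall A, measurable A -> fine (S z A) = 0.
Proof.
move=> z0 A mA; have [[x _]|T0] := pselect (exists x : T, True); last first.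
  have -> : A = set0 by apply/seteqP; split=> // y Ay; apply: T0; exists y.
  by rewrite charge0.
apply/eqP/negPn/negP => Sz_neq0.
set y := fine (S z A); set s := fine (S (dirac_charge x) A).
pose t := - ((`|s| + 1) / y).
have prob : is_prob (cadd (cscale t z) (dirac_charge x)).
  apply: is_prob_eq (is_prob_dirac_charge x) => B mB.
  by rewrite caddE cscaleE z0 // mule0 add0e.
have := (S_stoch.2 _ prob).1 A mA; rewrite (charge_fineE _ mA) lee_fin.
rewrite stoch_fine_linear // -/y -/s /t mulNr -mulrA mulVf // mulr1.
by have := ler_norm s; lra.
Qed.

Lemma stoch_eq mu nu : (forall A, measurable A -> mu A = nu A) ->
  forall A, measurable A -> S mu A = S nu A.
Proof.
move=> munu A mA; apply: charge_eq_fine => //.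
have : fine (S (cadd (cscale 1 mu) (cscale (-1) nu)) A) = 0.
  apply: stoch_null => // B mB.
  by rewrite caddE !cscaleE munu // mul1e mulN1e subee // fin_num_measure.
by rewrite stoch_fine_linear // stoch_fineZ // mul1r mulN1r; lra.
Qed.

Lemma stoch_fine_comb mu (a b : R) p q :
  (forall A, measurable A -> mu A = (a%:E * p A + b%:E * q A)%E) ->
  forall A, measurable A -> fine (S mu A) = a * fine (S p A) + b * fine (S q A).
Proof.
move=> muE A mA; rewrite (@stoch_eq _ (cadd (cscale a p) (cscale b q))) //.
by rewrite stoch_fine_linear // stoch_fineZ.
Qed.

Lemma stoch_tvnorm_le mu : tvnorm (S mu) <= tvnorm mu.
Proof.
have [p [q [a [b [-> [a_ge0 b_ge0] p1 q1 muE]]]]] := jordan_prob_decomposition mu.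
have [[mP _] [mN _] PN PN0] := hahn_setsP (S mu).
rewrite tvnorm_hahnE !(stoch_fine_comb muE) //.
have diff_le1 c r : 0 <= c -> (c != 0 -> is_prob r) ->
    -c <= c * (fine (S r (hahn_sets (S mu)).1) - fine (S r (hahn_sets (S mu)).2)) <= c.
  move=> c_ge0 r1; have [->|/r1 r_prob] := eqVneq c 0; first by rewrite oppr0 mul0r lexx.
  have := is_prob_partition_le1 (S_stoch.2 _ r_prob) mP mN PN PN0.
  by rewrite ler_norml => /andP[? ?]; apply/andP; split; nra.
have := diff_le1 _ _ a_ge0 p1; have := diff_le1 _ _ b_ge0 q1; lra.
Qed.

Lemma stoch_mass mu : S mu setT = mu setT.
Proof.
have [p [q [a [b [_ _ p1 q1 muE]]]]] := jordan_prob_decomposition mu.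
have mass c r : (c != 0 -> is_prob r) -> c * fine (S r setT) = c * fine (r setT).
  move=> r1; have [->|/r1 r_prob] := eqVneq c 0; first by rewrite !mul0r.
  by rewrite (S_stoch.2 _ r_prob).2 r_prob.2.
apply: charge_eq_fine => //.
rewrite (stoch_fine_comb muE) // (charge_fine_comb _ (muE _ _)) //.
by congr (_ + _); apply: mass; rewrite ?oppr_eq0.
Qed.

Lemma iter_stoch_null_mass nu k : is_null_mass nu -> is_null_mass (iter k S nu).
Proof. by move=> nu0; elim: k => //= k; rewrite /is_null_mass stoch_mass. Qed.

Lemma iter_stoch_tvnorm_le nu k : tvnorm (iter k S nu) <= tvnorm nu.
Proof. by elim: k => //= k; apply: le_trans (stoch_tvnorm_le _). Qed.

End stochastic_operator.

Lemma lt_pinfty_of_leD (R : realDomainType) (x y z : \bar R) (s : R) :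
  0 < s -> x \is a fin_num -> (z < +oo)%E -> (x + s%:E * y <= z)%E -> (y < +oo)%E.
Proof.
move=> s_gt0 + z_fin; case: x => [x _| //| //]; case: y => [r _|| //]; first exact: ltry.
by rewrite gt0_muley ?lte_fin // addey // => /le_lt_trans/(_ z_fin); rewrite ltxx.
Qed.

Section lyapunov_orbit.
Context {R : realType} (d : measure_display) (T : measurableType d).
Variables (V W : T -> R) (S : {charge set T -> \bar R} -> {charge set T -> \bar R}).
Variables (K varsigma : R) (nu : {charge set T -> \bar R}).
Hypotheses (V_ge0 : forall x, 0 <= V x) (W_ge0 : forall x, 0 <= W x).
Hypotheses (varsigma_gt0 : 0 < varsigma) (S_MV : forall mu, in_MW V mu -> in_MW V (S mu)).
Hypothesis lyapunov : forall mu, in_MW V mu ->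
  (wnorm V (S mu) + varsigma%:E * wnorm W mu <= wnorm V mu + (K * tvnorm mu)%:E)%E.
Hypothesis nuV : in_MW V nu.

Lemma iter_in_MW k : in_MW V (iter k S nu).
Proof. by elim: k => //= k; exact: S_MV. Qed.

Let wV k : wnorm V (iter k S nu) = (fine (wnorm V (iter k S nu)))%:E.
Proof. exact: wnorm_fineE V_ge0 (iter_in_MW k). Qed.

Lemma iter_in_MW_rate k : in_MW W (iter k S nu).
Proof.
rewrite /in_MW; apply: (lt_pinfty_of_leD varsigma_gt0 _ _ (lyapunov (iter_in_MW k))).
  by rewrite -[S _]/(iter k.+1 S nu) wV.
by rewrite wV -EFinD ltry.
Qed.

Lemma lyapunov_iter k :
  fine (wnorm V (iter k.+1 S nu)) + varsigma * fine (wnorm W (iter k S nu))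
    <= fine (wnorm V (iter k S nu)) + K * tvnorm (iter k S nu).
Proof.
have := lyapunov (iter_in_MW k).
rewrite -[S _]/(iter k.+1 S nu) (wV k.+1) (wV k) (wnorm_fineE W_ge0 (iter_in_MW_rate k)).
by rewrite -!EFinM -!EFinD lee_fin.
Qed.

End lyapunov_orbit.

Theorem lemma4p3 (R : realType) (d : measure_display) (T : measurableType d)
  (V : T -> R) (phi : R -> R)
  (S : {charge set T -> \bar R} -> {charge set T -> \bar R})
  (K varsigma : R) (N : nat) (gammaH A : R) :
  measurable_fun setT V -> (forall x, 1 <= V x) ->
  admissible_rate phi ->
  stochastic_op_on V S ->
  0 < K -> 0 < varsigma < 1 ->
  (forall mu, in_MW V mu ->
     (wnorm V (S mu) + varsigma%:E * wnorm (phi \o V) mu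
      <= wnorm V mu + (K * tvnorm mu)%:E)%E) ->
  (1 <= N)%N -> 0 < gammaH < 1 -> K / varsigma < A ->
  (forall nu, is_null_mass nu -> in_MW (phi \o V) nu ->
     (wnorm (phi \o V) nu <= (A * tvnorm nu)%:E)%E ->
     tvnorm (iter N S nu) <= gammaH * tvnorm nu) ->
  let beta := (1 - gammaH) / (K * N%:R) in
  let alpha := beta * (varsigma - K / A) in
  let tnorm := fun mu => ((tvnorm mu)%:E + beta%:E * wnorm V mu)%E in
  forall nu, is_null_mass nu -> in_MW V nu ->
  exists n : nat, (N <= n <= 2 * N - 1)%N /\
    (tnorm (iter n S nu) + alpha%:E * \sum_(0 <= k < n) wnorm (phi \o V) (iter k S nu)
     <= tnorm nu)%E.
Proof.
move=> _ V_ge1 phi_adm [S_stoch [S_MV _]] K_gt0 /andP[vs_gt0 _] lyapunov N_gt0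
  /andP[gamma_gt0 gamma_lt1] KA coupling beta alpha tnorm nu nu0 nuV.
have V_ge0 x : 0 <= V x := le_trans ler01 (V_ge1 x).
have phiV_ge0 x : 0 <= (phi \o V) x.
  by case: phi_adm => _ phi_ge1 _ _; exact: le_trans ler01 (phi_ge1 _ (V_ge1 x)).
pose t k := tvnorm (iter k S nu).
pose v k := fine (wnorm V (iter k S nu)).
pose f k := fine (wnorm (phi \o V) (iter k S nu)).
have orbit_phiV := iter_in_MW_rate V_ge0 vs_gt0 S_MV lyapunov nuV.
have wphiV k : wnorm (phi \o V) (iter k S nu) = (f k)%:E.
  exact: wnorm_fineE phiV_ge0 (orbit_phiV k).
have coupling_orbit k : (k < N)%N -> f k <= A * t k -> t (k + N)%N <= gammaH * t k.
  move=> _ le_ft; rewrite /t addnC iterD; apply: coupling.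
  - exact: iter_stoch_null_mass.
  - exact: orbit_phiV.
  - by rewrite wphiV lee_fin.
have A_gt0 : 0 < A := lt_trans (divr_gt0 K_gt0 vs_gt0) KA.
have gamma01 : 0 <= gammaH <= 1 by rewrite !ltW.
have f_ge0 k : 0 <= f k := fine_ge0 (wnorm_ge0 _ phiV_ge0).
have t_le0 k : t k <= t 0 := iter_stoch_tvnorm_le S_stoch _ _.
case: (lyapunov_coupling_descent (lyapunov_iter V_ge0 phiV_ge0 vs_gt0 S_MV lyapunov nuV)
  K_gt0 f_ge0 (fun k => tvnorm_ge0 _) t_le0 A_gt0 gamma01 N_gt0 coupling_orbit).
move=> n [Nn descent]; exists n; split => //.
have wV k : wnorm V (iter k S nu) = (v k)%:E.
  exact: wnorm_fineE V_ge0 (iter_in_MW S_MV nuV k).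
rewrite /tnorm (wV n) (wV 0) (eq_bigr _ (fun k _ => wphiV k)) sumEFin.
by rewrite -!EFinM -!EFinD lee_fin.
Qed.
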